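(* Let $n\ge1$, $m\ge0$, let $z\in Z_{n,m}$ with $z_i=0$ for some $1\leq i\leq m$, and let $P=(z=x^0\sim x^1\sim\dots\sim x^d=0)$ be a geodesic in $Z_{n,m}$ between $z$ and $0$. Then, for either choice of sign, there exists a geodesic $P'=(z=y^0\sim y^1\sim\dots\sim y^d=0)$ such that (1) $y^t_i\leq0$ for all $0\leq t\leq d$ (respectively, $y^t_i\geq0$ for all $0\le t\le d$), and (2) $\{y^t_j:0\leq t\leq d\}=\{x^t_j:0\leq t\leq d\}$ for every $0\leq j\leq m+1$ with $j\neq i$.
   Context: Elements of $\mathbb{Z}_n$ are identified with representatives in $\{0,\dots,n-1\}$. The dYoke graph $Z_{n,m}$ has vertices $u=(u_0,\dots,u_{m+1})\in\mathbb{Z}_n\times\{-1,0,1\}^m\times\mathbb{Z}_n$ with $\sum_{i=0}^{m+1}u_i\equiv0\pmod n$; $u,v$ are adjacent if there is $0\leq i\leq m$ such that $u_j=v_j$ for $j\notin\{i,i+1\}$ and either ($u_i=v_i+1$, $u_{i+1}=v_{i+1}-1$) or ($u_i=v_i-1$, $u_{i+1}=v_{i+1}+1$), with arithmetic in coordinates $0,m+1$ in $\mathbb{Z}_n$. $0$ is the all-zero vertex. *)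

From mathcomp Require Import all_boot all_order all_algebra.
From mathcomp Require Import intdiv.
Set Implicit Arguments. Unset Strict Implicit. Unset Printing Implicit Defensive.
Import Order.TTheory GRing.Theory Num.Theory.
Local Open Scope ring_scope.

(* A vertex of Z_{n,m} is encoded as u : nat -> int, with u k the k-th
   coordinate for 0 <= k <= m+1 and u k = 0 for k > m+1 (canonical padding).
   Coordinates 0 and m+1 are elements of Z_n, represented in {0,...,n-1}. *)
Definition dyoke_vertex (n m : nat) (u : nat -> int) : Prop :=
  [/\ 0 <= u 0%N < n%:Z, 0 <= u m.+1 < n%:Z,
      (forall k : nat, (1 <= k <= m)%N -> u k \in [:: -1; 0; 1]),
      (forall k : nat, (m.+1 < k)%N -> u k = 0) &
      (n%:Z %| \sum_(0 <= k < m.+2) u k)%Z].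

Definition coord_eq (n m : nat) (k : nat) (a b : int) : bool :=
  if (k == 0%N) || (k == m.+1) then (n%:Z %| (a - b))%Z else a == b.

Definition dyoke_adj (n m : nat) (u v : nat -> int) : Prop :=
  exists i : nat, (i <= m)%N /\
    (forall j : nat, j != i -> j != i.+1 -> u j = v j) /\
    ((coord_eq n m i (u i) (v i + 1) /\ coord_eq n m i.+1 (u i.+1) (v i.+1 - 1)) \/
     (coord_eq n m i (u i) (v i - 1) /\ coord_eq n m i.+1 (u i.+1) (v i.+1 + 1))).

Definition dyoke_zero : nat -> int := fun _ => 0.

Definition dyoke_path (n m : nat) (x : nat -> nat -> int) (d : nat)
    (a b : nat -> int) : Prop :=
  [/\ x 0%N = a, x d = b,
      (forall t : nat, (t <= d)%N -> dyoke_vertex n m (x t)) &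
      (forall t : nat, (t < d)%N -> dyoke_adj n m (x t) (x t.+1))].

Definition dyoke_geodesic (n m : nat) (x : nat -> nat -> int) (d : nat)
    (a b : nat -> int) : Prop :=
  dyoke_path n m x d a b /\
  forall (x' : nat -> nat -> int) (d' : nat), dyoke_path n m x' d' a b -> (d <= d')%N.

Definition coord_values (x : nat -> nat -> int) (d j : nat) (a : int) : Prop :=
  exists2 t : nat, (t <= d)%N & x t j = a.

(* Record a walk from [z] by its moves [(e, sg)], [sg = 1] or
   [-1], each adding [sg] to coordinate [e] and [-sg] to coordinate [e + 1].
   On a geodesic, no two moves on the same edge have opposite signs: an
   innermost such pair could be deleted without leaving the graph, giving a
   shorter walk.  Coordinates [j < i] only feel the moves on edges [< i] and
   coordinates [j > i] only those on edges [>= i], so every interleaving of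
   these two subsequences is again a geodesic visiting the same values on each
   coordinate [j <> i].  Coordinate [i] is moved by edge [i - 1] in one
   direction and by edge [i] in the other, equally often; a greedy
   interleaving keeps it in [{0, -1}], the symmetric one in [{0, 1}]. *)

From mathcomp Require Import all_boot all_order all_algebra.
From mathcomp Require Import intdiv zify.
From Stdlib Require Import FunctionalExtensionality Classical.
Set Implicit Arguments. Unset Strict Implicit. Unset Printing Implicit Defensive.
Import Order.TTheory GRing.Theory Num.Theory.
Local Open Scope ring_scope.

(** * Prefixes and interleavings *)

Definition all_prefixes T (P : seq T -> Prop) (s : seq T) : Prop :=
  forall t, P (take t s).

Lemma all_prefixes_cons T (P : seq T -> Prop) x s :
  all_prefixes P (x :: s) <-> P [::] /\ all_prefixes (fun u => P (x :: u)) s.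
Proof.
split=> [h | [h0 h] [|t] //]; last exact: h.
by split=> [|t]; [apply: (h 0%N) | apply: (h t.+1)].
Qed.

Lemma all_prefixes_cat T (P : seq T -> Prop) s1 s2 :
  all_prefixes P (s1 ++ s2) <-> all_prefixes P s1 /\ all_prefixes (fun u => P (s1 ++ u)) s2.
Proof.
elim: s1 P => [|x s1 IH] P /=.
  by split=> [h | [_ h] //]; split=> // t; have := h 0%N; rewrite take0.
have := IH (fun u => P (x :: u)); rewrite !all_prefixes_cons; tauto.
Qed.

Lemma has_split T (p : pred T) s : has p s ->
  exists s1 x s2, [/\ s = s1 ++ x :: s2, p x & ~~ has p s1].
Proof. by case/split_find=> x s1 s2 px no_p; exists s1, x, s2; rewrite cat_rcons. Qed.

Lemma mem_split (T : eqType) (x : T) s : x \in s -> exists s1 s2, s = s1 ++ x :: s2.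
Proof. by case/splitPr=> s1 s2; exists s1, s2. Qed.

Lemma filter_take_prefix T (p : pred T) s t : exists u, filter p (take t s) = take u (filter p s).
Proof.
exists (count p (take t s)).
by rewrite -{3}(cat_take_drop t s) filter_cat take_size_cat // size_filter.
Qed.

Lemma take_filter_prefix T (p : pred T) s u :
  exists2 t, (t <= size s)%N & take u (filter p s) = filter p (take t s).
Proof.
elim: s u => [|x s IH] u; first by exists 0%N.
case: u => [|u]; first by exists 0%N => //; rewrite take0.
rewrite /=; case: ifP => px.
  by have [t le_t E] := IH u; exists t.+1 => //=; rewrite px E.
by have [t le_t E] := IH u.+1; exists t.+1 => //=; rewrite px.
Qed.

Lemma two_valued_sum_eq0 (T : eqType) (h : T -> int) c s :
    all (fun x => h x \in [:: 0; c]) s -> \sum_(x <- s) h x = 0 ->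
  all (fun x => h x == 0) s.
Proof.
move=> /allP two sum0; have /eqP : \sum_(x <- s) c * h x = 0 by rewrite -mulr_sumr sum0 mulr0.
rewrite big_seq psumr_eq0 => [/allP zero|x /two]; last first.
  by rewrite !inE => /orP[] /eqP->; rewrite ?mulr0 // -expr2 sqr_ge0.
apply/allP=> x x_in; move: (zero x x_in) (two x x_in); rewrite x_in mulf_eq0 !inE /=.
by case/orP=> /eqP->; rewrite ?eqxx // orbb.
Qed.

Lemma two_class_signs (T : eqType) (p : pred T) (h : T -> int) s :
    {in s, forall x, `|h x| <= 1} ->
    {in s &, forall x y, p x = p y -> h x != 0 -> h y != 0 -> h x = h y} ->
    \sum_(x <- s) h x = 0 ->
  exists2 sg : int, `|sg| = 1 &
    {in s, forall x, h x \in (if p x then [:: 0; sg] else [:: 0; - sg])}.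
Proof.
move=> unit same sum0.
have [/hasP[x0 x0_in /andP[px0 nz0]] | /hasPn none] := boolP (has (fun x => p x && (h x != 0)) s).
  exists (h x0); first by have := unit x0 x0_in; lia.
  move=> x x_in; case: (eqVneq (h x) 0) => [-> | nz]; first by case: ifP; rewrite inE eqxx.
  case: ifP => px; first by rewrite (same x0 x) ?px ?inE ?eqxx ?orbT.
  have : h x = - h x0 \/ h x = h x0 by have := unit x x_in; have := unit x0 x0_in; lia.
  case=> [-> | eq_x]; first by rewrite !inE eqxx orbT.
  have two : all (fun y => h y \in [:: 0; h x0]) s.
    apply/allP=> y y_in; case: (eqVneq (h y) 0) => [-> | nz_y]; first by rewrite inE eqxx.
    rewrite !inE; case: (boolP (p y)) => py.
      by rewrite (same x0 y) ?py ?eqxx ?orbT.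
    by rewrite -eq_x (same x y) ?px ?(negbTE py) ?eqxx ?orbT.
  by have /allP/(_ x0 x0_in) := two_valued_sum_eq0 two sum0; rewrite (negbTE nz0).
have [/hasP[y0 y0_in /andP[npy0 nz0]] | /hasPn none'] :=
  boolP (has (fun x => ~~ p x && (h x != 0)) s).
  exists (- h y0); first by have := unit y0 y0_in; lia.
  move=> x x_in; case: ifP => px.
    by move: (none x x_in); rewrite px /= negbK => /eqP->; rewrite inE eqxx.
  case: (eqVneq (h x) 0) => [-> | nz]; first by rewrite inE eqxx.
  by rewrite opprK (same y0 x) ?px ?(negbTE npy0) ?inE ?eqxx ?orbT.
exists 1 => // x x_in; move: (none x x_in) (none' x x_in).
by case: (p x) => /= [/negPn/eqP-> _ | _ /negPn/eqP->]; rewrite inE eqxx.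
Qed.

(* Greedy merge: after each nonzero entry of [L], enter [R] up to and including
   its next nonzero entry, so that the partial sums alternate between 0 and [sg]. *)
Lemma balanced_interleaving (T : eqType) (p : pred T) (h : T -> int) sg L R :
    all p L -> all (predC p) R ->
    all (fun x => h x \in [:: 0; sg]) L -> all (fun x => h x \in [:: 0; - sg]) R ->
    \sum_(x <- L) h x + \sum_(x <- R) h x = 0 ->
  exists w, [/\ filter p w = L, filter (predC p) w = R &
    all_prefixes (fun u => \sum_(x <- u) h x \in [:: 0; sg]) w].
Proof.
have no_p u : all (predC p) u -> filter p u = [::].
  by move=> u_np; apply/eqP/negPn; rewrite -has_filter -all_predC.
have sum_zero u : {in u, forall y, h y = 0} -> \sum_(y <- u) h y = 0.
  by move=> zero; rewrite big_seq big1 // => y /zero.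
elim: L R => [|x L IH] R pL pR hL hR sum0.
  have /allP zero : all (fun y => h y == 0) R.
    by apply: (two_valued_sum_eq0 hR); move: sum0; rewrite big_nil add0r.
  exists R; split; [exact: no_p | exact/all_filterP | move=> t].
  by rewrite sum_zero ?inE ?eqxx // => y /mem_take /zero /eqP.
case/andP: pL => px pL; case/andP: hL => hx hL; rewrite big_cons -addrA in sum0.
case: (eqVneq (h x) 0) => [hx0 | nz].
  have [|w [fp fq pre]] := IH R pL pR hL hR; first by move: sum0; rewrite hx0 add0r.
  exists (x :: w); split; rewrite /= ?px ?fp ?fq //.
  apply/all_prefixes_cons; split; first by rewrite big_nil inE eqxx.
  by move=> t; rewrite big_cons hx0 add0r; apply: pre.
have hxs : h x = sg by move: hx; rewrite !inE (negbTE nz) => /eqP.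
have [|R1 [y [R2 [RE nz_y /hasPn zero1]]]] := @has_split _ (fun y => h y != 0) R.
  apply/negPn/negP => /hasPn zeroR; move/negP: nz; apply.
  have hxL : all (fun y => h y \in [:: 0; sg]) (x :: L) by apply/andP.
  apply: (allP (two_valued_sum_eq0 hxL _) x (mem_head _ _)).
  by move: sum0; rewrite big_cons (sum_zero R) ?addr0 // => z /zeroR /negPn /eqP.
have {}zero1 : {in R1, forall z, h z = 0} by move=> z /zero1 /negPn /eqP.
move: pR hR sum0; rewrite RE !all_cat /= big_cat /= big_cons (sum_zero R1) // add0r.
case/and3P=> pR1 py pR2 /and3P[_ hy hR2] sum0.
have hy' : h y = - sg by move: hy; rewrite !inE (negbTE nz_y) => /eqP.
have [|w [fp fq pre]] := IH R2 pL pR2 hL hR2.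
  by move: sum0; rewrite hxs hy' addrCA addNKr.
exists (x :: R1 ++ y :: w); split.
- by rewrite /= px filter_cat no_p //= (negbTE py) fp.
- by rewrite /= px filter_cat (all_filterP pR1) /= py fq.
apply/all_prefixes_cons; split; first by rewrite big_nil inE eqxx.
apply/all_prefixes_cat; split=> [t|].
  by rewrite big_cons sum_zero ?hxs ?addr0 ?inE ?eqxx ?orbT // => z /mem_take /zero1.
apply/all_prefixes_cons; split=> [|t].
  by rewrite cats0 big_cons sum_zero ?hxs ?addr0 ?inE ?eqxx ?orbT.
rewrite big_cons big_cat /= sum_zero // big_cons hxs hy' add0r addNKr.
exact: pre.
Qed.

(** * Moves *)

Notation move := (nat * int)%type.

Definition shift (mv : move) (j : nat) : int :=
  (if j == mv.1 then mv.2 else 0) - (if j == mv.1.+1 then mv.2 else 0).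

Definition inverse_move (mv : move) : move := (mv.1, - mv.2).

Definition move_ok (m : nat) (mv : move) : bool := (mv.1 <= m)%N && (`|mv.2| == 1).

Definition lift (z : nat -> int) (s : seq move) (j : nat) : int :=
  z j + \sum_(mv <- s) shift mv j.

Lemma shift_out (mv : move) j : j != mv.1 -> j != mv.1.+1 -> shift mv j = 0.
Proof. by rewrite /shift => /negbTE-> /negbTE->; rewrite subr0. Qed.

Lemma shift_touch mv j : shift mv j != 0 -> j = mv.1 \/ j = mv.1.+1.
Proof.
rewrite /shift; case: (j =P mv.1) => [-> _ | _]; first by left.
by case: (j =P mv.1.+1) => [-> _ | _]; [right | rewrite subrr eqxx].
Qed.

Lemma shift_inverse mv j : shift (inverse_move mv) j = - shift mv j.
Proof. by rewrite /shift /=; case: eqP; case: eqP; lia. Qed.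

Lemma shift_bound m mv j : move_ok m mv -> `|shift mv j| <= 1.
Proof. by case/andP=> _ /eqP; rewrite /shift; case: eqP; case: eqP; lia. Qed.

Lemma sum_shift mv N : (mv.1.+1 < N)%N -> \sum_(0 <= k < N) shift mv k = 0.
Proof.
move=> lt_N; rewrite sumrB -!big_mkcond /= !big_nat1_eq.
by rewrite lt_N (ltn_trans (ltnSn _) lt_N) subrr.
Qed.

Lemma lift_nil z : lift z [::] =1 z.
Proof. by move=> j; rewrite /lift big_nil addr0. Qed.

Lemma lift_cat z s1 s2 : lift z (s1 ++ s2) =1 lift (lift z s1) s2.
Proof. by move=> j; rewrite /lift big_cat addrA. Qed.

Lemma lift_rcons z s mv j : lift z (rcons s mv) j = lift z s j + shift mv j.
Proof. by rewrite -cats1 lift_cat /lift big_seq1. Qed.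

Definition has_cancel (s : seq move) : Prop :=
  exists s1 mv s2 s3, s = s1 ++ mv :: s2 ++ inverse_move mv :: s3.

Lemma has_cancel_minimal s : has_cancel s ->
  exists s1 mv s2 s3, [/\ s = s1 ++ mv :: s2 ++ inverse_move mv :: s3,
    ~ has_cancel (mv :: s2) & ~ has_cancel (s2 ++ [:: inverse_move mv])].
Proof.
case=> s1 [mv [s2 [s3 ->]]]; have [k lt_k] : exists k, (size s2 < k)%N by exists (size s2).+1.
elim: k s1 mv s2 s3 lt_k => // k IH s1 mv s2 s3 lt_k.
case: (classic (has_cancel (mv :: s2))) => [[t1 [mv' [t2 [t3 E]]]] | no_l].
  have := congr1 size E; rewrite /= !size_cat /= size_cat /= => sizeE.
  have [|r1 [r2 [r3 [r4 [E' min_l min_r]]]]] :=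
    IH (s1 ++ t1) mv' t2 (t3 ++ inverse_move mv :: s3); first by lia.
  exists r1, r2, r3, r4; split=> //.
  by rewrite -E' -cat_cons E -!catA /= -!catA.
case: (classic (has_cancel (s2 ++ [:: inverse_move mv]))) => [[t1 [mv' [t2 [t3 E]]]] | no_r].
  have := congr1 size E; rewrite /= !size_cat /= size_cat /= => sizeE.
  have [|r1 [r2 [r3 [r4 [E' min_l min_r]]]]] := IH (s1 ++ mv :: t1) mv' t2 (t3 ++ s3).
    by lia.
  exists r1, r2, r3, r4; split=> //.
  by rewrite -E' -[inverse_move mv :: s3]cat1s catA E -!catA /= -!catA.
by exists s1, mv, s2, s3.
Qed.

Lemma no_cancel_same_edge m s : ~ has_cancel s -> all (move_ok m) s ->
  {in s &, forall a b, a.1 = b.1 -> a = b}.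
Proof.
move=> no s_ok [e sa] [e' sb] a_in b_in /= eq_e; subst e'.
case: (eqVneq sa sb) => [-> // | ne]; exfalso; apply: no.
have opp : sb = - sa.
  move: (allP s_ok _ a_in) (allP s_ok _ b_in) ne; rewrite /move_ok /=.
  by move=> /andP[_ /eqP] + /andP[_ /eqP]; lia.
have [s1 [s2 sE]] := mem_split a_in.
move: b_in; rewrite sE mem_cat inE => /or3P[b_in | /eqP[eq_s] | b_in].
- have [t1 [t2 s1E]] := mem_split b_in.
  by exists t1, (e, sb), t2, s2; rewrite s1E -catA /= /inverse_move /= opp opprK.
- by rewrite eq_s eqxx in ne.
have [t1 [t2 s2E]] := mem_split b_in.
by exists s1, (e, sa), t1, t2; rewrite s2E /inverse_move /= opp.
Qed.

Lemma shift_same_edge a b c : a.1 = b.1 -> shift a c != 0 -> shift b c = shift a c -> b = a.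
Proof.
case: a b => [e sa] [_ sb] /= <-; rewrite /shift /=.
by case: (c =P e) => h1; case: (c =P e.+1) => h2 /= nz eq_s; congr pair; lia.
Qed.

Lemma shift_same_edge_opp a b c :
  a.1 = b.1 -> shift a c != 0 -> shift b c = - shift a c -> b = inverse_move a.
Proof.
move=> eq_e nz eq_s; apply: (@shift_same_edge _ _ c) => //.
  by rewrite shift_inverse oppr_eq0.
by rewrite shift_inverse.
Qed.

(* Only the two edges [c - 1] and [c] move coordinate [c]. *)
Lemma shift_alternating a b d c : shift a c != 0 ->
    shift b c = - shift a c -> shift d c = shift a c ->
  [\/ b = inverse_move a, d = inverse_move b | d = a].
Proof.
move=> nz_a eq_b eq_d.
have nz_b : shift b c != 0 by rewrite eq_b oppr_eq0.
have nz_d : shift d c != 0 by rewrite eq_d.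
case: (eqVneq a.1 b.1) => [ab | ab].
  by constructor 1; exact: (shift_same_edge_opp ab nz_a eq_b).
case: (eqVneq b.1 d.1) => [bd | bd].
  by constructor 2; apply: (shift_same_edge_opp bd nz_b); rewrite eq_d eq_b opprK.
constructor 3; apply: (shift_same_edge _ nz_a eq_d).
by move: (shift_touch nz_a) (shift_touch nz_b) (shift_touch nz_d) ab bd; lia.
Qed.

Lemma lift_cancel z mv s : lift z (mv :: s ++ [:: inverse_move mv]) =1 lift z s.
Proof.
by move=> j; rewrite /lift big_cons big_cat /= big_seq1 shift_inverse [shift mv j + _]addrC subrK.
Qed.

Lemma eq_lift z z' s : z =1 z' -> lift z s =1 lift z' s.
Proof. by move=> eq_z j; rewrite /lift eq_z. Qed.

Lemma lift_cancel_mid z s1 mv s2 s3 :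
  lift z (s1 ++ mv :: s2 ++ inverse_move mv :: s3) =1 lift z (s1 ++ s2 ++ s3).
Proof.
move=> j; rewrite -[inverse_move mv :: s3]cat1s catA -cat_cons !lift_cat.
exact/eq_lift/lift_cancel.
Qed.

Lemma lift_take_transfer z (p : pred move) j s s' :
    (forall mv, ~~ p mv -> shift mv j = 0) -> filter p s = filter p s' ->
  forall t, exists2 t', (t' <= size s')%N & lift z (take t s) j = lift z (take t' s') j.
Proof.
move=> untouched eq_f t.
have lift_f u : lift z u j = lift z (filter p u) j.
  by rewrite /lift big_filter [in LHS](bigID p) /= [X in _ + (_ + X)]big1 ?addr0.
have [u Eu] := filter_take_prefix p s t.
have [t' le_t' Et'] := take_filter_prefix p s' u.
by exists t' => //; rewrite lift_f Eu eq_f Et' -lift_f.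
Qed.

(** * Walks in the dYoke graph *)

Section Dyoke.
Variables n m : nat.

Definition coord_repr (j : nat) (a : int) : int :=
  if (j == 0%N) || (j == m.+1) then (a %% n%:Z)%Z else a.

Definition inner_unit (v : nat -> int) : Prop :=
  forall j, (1 <= j <= m)%N -> `|v j| <= 1.

Lemma coord_repr_id j a : j != 0%N -> j != m.+1 -> coord_repr j a = a.
Proof. by rewrite /coord_repr => /negbTE-> /negbTE->. Qed.

Lemma coord_repr_vertex u j : dyoke_vertex n m u -> coord_repr j (u j) = u j.
Proof.
case=> u0 um _ _ _; rewrite /coord_repr.
by case: eqP => [->|_]; [rewrite modz_small | case: eqP => [->|//]; rewrite modz_small].
Qed.

Lemma coord_repr_addl j a b : coord_repr j (coord_repr j a + b) = coord_repr j (a + b).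
Proof. by rewrite /coord_repr; case: ifP => ->; rewrite ?modzDml. Qed.

Lemma coord_repr_idem j a : coord_repr j (coord_repr j a) = coord_repr j a.
Proof. by have := coord_repr_addl j a 0; rewrite !addr0. Qed.

Lemma coord_eqE j a b : coord_eq n m j a b = (coord_repr j a == coord_repr j b).
Proof. by rewrite /coord_eq /coord_repr; case: ifP => _; rewrite ?eqz_mod_dvd. Qed.

Lemma coord_repr_dvd j a : (n%:Z %| coord_repr j a - a)%Z.
Proof.
rewrite /coord_repr; case: ifP => _; last by rewrite subrr dvdz0.
by rewrite -eqz_mod_dvd modz_mod.
Qed.

Lemma repr_lift_vertex z s :
    (0 < n)%N -> dyoke_vertex n m z -> all (move_ok m) s -> inner_unit (lift z s) ->
  dyoke_vertex n m (fun j => coord_repr j (lift z s j)).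
Proof.
move=> n_gt0 [_ _ _ z_out z_sum] s_ok s_unit.
have edge_le (mv : move) : mv \in s -> (mv.1 <= m)%N by move/(allP s_ok)/andP=> [].
have repr_range j : (j == 0%N) || (j == m.+1) -> 0 <= coord_repr j (lift z s j) < n%:Z.
  by rewrite /coord_repr => ->; rewrite modz_ge0 ?ltz_pmod //; lia.
split.
- by apply: repr_range; rewrite eqxx.
- by apply: repr_range; rewrite eqxx orbT.
- move=> j j_in; rewrite coord_repr_id; [|lia|lia].
  by have := s_unit j j_in; rewrite !inE; lia.
- move=> j j_out; rewrite coord_repr_id; [|lia|lia].
  rewrite /lift z_out // add0r big1_seq // => mv /andP[_ /edge_le le_m].
  by apply: shift_out; lia.
have lift_sum : \sum_(0 <= k < m.+2) lift z s k = \sum_(0 <= k < m.+2) z k.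
  rewrite big_split /= exchange_big /= [X in _ + X]big1_seq ?addr0 //.
  by move=> mv /andP[_ /edge_le le_m]; apply: sum_shift; lia.
have -> : \sum_(0 <= k < m.+2) coord_repr k (lift z s k) =
    \sum_(0 <= k < m.+2) (coord_repr k (lift z s k) - lift z s k) + \sum_(0 <= k < m.+2) z k.
  by rewrite -lift_sum -big_split /=; apply: eq_bigr => k _; rewrite subrK.
by rewrite rpredD // rpred_sum // => k _; apply: coord_repr_dvd.
Qed.

Lemma adj_repr_shift a mv : move_ok m mv ->
  dyoke_adj n m (fun j => coord_repr j (a j)) (fun j => coord_repr j (a j + shift mv j)).
Proof.
case/andP=> le_m /eqP sgn; exists mv.1; split=> //; split.
  by move=> j h1 h2; rewrite shift_out ?addr0.
have shift1 : shift mv mv.1 = mv.2 by rewrite /shift eqxx; case: eqP; lia.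
have shift2 : shift mv mv.1.+1 = - mv.2 by rewrite /shift eqxx; case: eqP; lia.
have step j (c : int) : coord_eq n m j (coord_repr j (a j)) (coord_repr j (a j + c) - c).
  by rewrite coord_eqE coord_repr_addl addrK coord_repr_idem.
rewrite shift1 shift2; have [-> | ->] : mv.2 = -1 \/ mv.2 = 1 by lia.
- by left; rewrite opprK; split; [have := step mv.1 (-1) | have := step mv.1.+1 1];
    rewrite ?opprK.
- by right; split; [have := step mv.1 1 | have := step mv.1.+1 (-1)]; rewrite ?opprK.
Qed.

Lemma adj_move u v : dyoke_vertex n m u -> dyoke_vertex n m v -> dyoke_adj n m u v ->
  exists2 mv, move_ok m mv & forall j, v j = coord_repr j (u j + shift mv j).
Proof.
move=> uV vV [e [le_m [same steps]]].
have from_eq j c : coord_eq n m j (u j) (v j + c) -> v j = coord_repr j (u j - c).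
  rewrite coord_eqE => /eqP eq_uv.
  by rewrite -coord_repr_addl eq_uv coord_repr_addl addrK coord_repr_vertex.
have [sg sg_unit [eq1 eq2]] : exists2 sg : int, `|sg| = 1 &
    coord_eq n m e (u e) (v e - sg) /\ coord_eq n m e.+1 (u e.+1) (v e.+1 + sg).
  by case: steps => -[h1 h2]; [exists (-1); rewrite ?opprK | exists 1].
exists (e, sg); first by rewrite /move_ok le_m sg_unit eqxx.
move=> j; rewrite /shift /=; case: (eqVneq j e) => [->|ne1].
  by rewrite (ltn_eqF (ltnSn e)) subr0 (from_eq e (- sg) eq1) opprK.
case: (eqVneq j e.+1) => [->|ne2]; first by rewrite sub0r (from_eq e.+1 sg eq2).
by rewrite subrr addr0 same // coord_repr_vertex.
Qed.

Definition in_box (z : nat -> int) (s : seq move) : Prop :=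
  all_prefixes (fun u => inner_unit (lift z u)) s.

Definition walk (z : nat -> int) (s : seq move) (t j : nat) : int :=
  coord_repr j (lift z (take t s) j).

Lemma walk0 z s : dyoke_vertex n m z -> walk z s 0 = z.
Proof.
move=> zV; apply: functional_extensionality => j.
by rewrite /walk take0 lift_nil coord_repr_vertex.
Qed.

Lemma walk_path z s : (0 < n)%N -> dyoke_vertex n m z -> all (move_ok m) s -> in_box z s ->
  dyoke_path n m (walk z s) (size s) z (walk z s (size s)).
Proof.
move=> n_gt0 zV s_ok s_box; split=> //; first exact: walk0.
  move=> t _; apply: repr_lift_vertex => //.
  by apply/allP=> mv /mem_take; apply/allP.
move=> t lt_t; set mv := nth (0%N, 0) s t.
have -> : walk z s t.+1 = fun j => coord_repr j (lift z (take t s) j + shift mv j).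
  by apply: functional_extensionality => j; rewrite /walk (take_nth (0%N, 0) lt_t) lift_rcons.
by apply: adj_repr_shift; apply: (allP s_ok); apply: mem_nth.
Qed.

Lemma walk_in_box z s :
  (forall t, (t <= size s)%N -> dyoke_vertex n m (walk z s t)) -> in_box z s.
Proof.
move=> walkV t j j_in.
have [t' le_t' ->] : exists2 t', (t' <= size s)%N & take t s = take t' s.
  case: (leqP t (size s)) => [le_t | /ltnW le_t]; first by exists t.
  by exists (size s); rewrite // take_size take_oversize.
have [_ _ /(_ j j_in) + _ _] := walkV t' le_t'.
by rewrite /walk coord_repr_id ?inE; [case/or3P => /eqP-> | lia | lia].
Qed.

Lemma path_walk x d z b : dyoke_path n m x d z b ->
  exists s, [/\ size s = d, all (move_ok m) s & forall t, (t <= d)%N -> x t = walk z s t].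
Proof.
case=> x0 _ xV xA.
suff /(_ d (leqnn d)) : forall k, (k <= d)%N -> exists s,
    [/\ size s = k, all (move_ok m) s & forall t, (t <= k)%N -> x t = walk z s t] by [].
elim=> [|k IH] le_k.
  exists [::]; split=> // t; rewrite leqn0 => /eqP->.
  by rewrite x0 walk0 // -x0; apply: xV.
have [s [sz s_ok xs]] := IH (ltnW le_k).
have [mv mv_ok x_step] := adj_move (xV k (ltnW le_k)) (xV k.+1 le_k) (xA k le_k).
exists (rcons s mv); split; first by rewrite size_rcons sz.
  by rewrite all_rcons mv_ok.
move=> t; rewrite leq_eqVlt => /orP[/eqP->|lt_t].
  apply: functional_extensionality => j.
  by rewrite x_step xs // /walk -sz take_size take_oversize ?size_rcons // lift_rcons
    coord_repr_addl.
by rewrite xs // /walk -cats1 takel_cat // sz.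
Qed.

Lemma in_box_cat z s1 s2 : in_box z (s1 ++ s2) <-> in_box z s1 /\ in_box (lift z s1) s2.
Proof.
have lift_catP u : inner_unit (lift z (s1 ++ u)) <-> inner_unit (lift (lift z s1) u).
  by split=> h j /h; rewrite lift_cat.
by rewrite /in_box all_prefixes_cat; split=> -[h1 h2]; split=> // t; apply/lift_catP.
Qed.

Lemma eq_in_box z z' s : z =1 z' -> in_box z s -> in_box z' s.
Proof. by move=> eq_z box t j /(box t); rewrite (eq_lift _ eq_z). Qed.

Lemma sum_shift_sign s c (sg : int) : all (move_ok m) s -> `|sg| = 1 ->
  ~~ has (fun mv => shift mv c == sg) s -> sg * \sum_(mv <- s) shift mv c <= 0.
Proof.
move=> s_ok sg1 /hasPn no_sg; rewrite mulr_sumr big_seq; apply: sumr_le0 => mv mv_in.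
by have := shift_bound c (allP s_ok mv mv_in); have := no_sg mv mv_in; case: ltgtP sg1; lia.
Qed.

(* Leaving [-1, 1] on coordinate [c] after deleting [mv] and its inverse takes
   a move back on [c] before that time and a move forth after it. *)
Lemma in_box_detour z mv s t c : move_ok m mv -> all (move_ok m) s -> (1 <= c <= m)%N ->
    in_box z (mv :: s ++ [:: inverse_move mv]) -> 1 < `|lift z (take t s) c| ->
  exists p1 b q1 p2 d q2, [/\ s = p1 ++ b :: q1 ++ p2 ++ d :: q2, shift mv c != 0,
    shift b c = - shift mv c & shift d c = shift mv c].
Proof.
move=> mv_ok s_ok c_in; rewrite /in_box all_prefixes_cons all_prefixes_cat.
move=> -[z_unit [mid_unit end_unit]]; rewrite /lift.
set S1 := \sum_(x <- take t s) shift x c; set S2 := \sum_(x <- drop t s) shift x c => out.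
have h0 : `|z c| <= 1 by have := z_unit c c_in; rewrite lift_nil.
have h1 : `|z c + (shift mv c + S1)| <= 1 by have := mid_unit t c c_in; rewrite /lift big_cons.
have h2 : `|z c + (S1 + S2)| <= 1.
  by have := end_unit 1%N c c_in; rewrite lift_cancel /lift -{1}(cat_take_drop t s) big_cat.
have sg1 : shift mv c = 1 \/ shift mv c = -1 by have := shift_bound c mv_ok; lia.
have [back forth] : shift mv c * S1 < 0 /\ 0 < shift mv c * S2.
  by move: h0 h1 h2 out; case: sg1 => ->; rewrite ?mul1r ?mulN1r; lia.
have ok_take : all (move_ok m) (take t s) by apply/allP=> x /mem_take; apply/allP.
have ok_drop : all (move_ok m) (drop t s) by apply/allP=> x /mem_drop; apply/allP.
have [|p1 [b [q1 [Eb /eqP b_c _]]]] :=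
  @has_split _ (fun x => shift x c == - shift mv c) (take t s).
  apply/negPn/negP => none; have := sum_shift_sign ok_take _ none.
  by rewrite -/S1 normrN mulNr; move: back; case: sg1 => ->; lia.
have [|p2 [d [q2 [Ed /eqP d_c _]]]] :=
  @has_split _ (fun x => shift x c == shift mv c) (drop t s).
  apply/negPn/negP => none; have := sum_shift_sign ok_drop _ none.
  by rewrite -/S2; move: forth; case: sg1 => ->; lia.
exists p1, b, q1, p2, d, q2; split=> //; last by case: sg1 => ->.
by rewrite -(cat_take_drop t s) Eb Ed -catA.
Qed.

Lemma in_box_cancel z mv s : all (move_ok m) (mv :: s) ->
    ~ has_cancel (mv :: s) -> ~ has_cancel (s ++ [:: inverse_move mv]) ->
  in_box z (mv :: s ++ [:: inverse_move mv]) -> in_box z s.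
Proof.
case/andP=> mv_ok s_ok no_l no_r box t c c_in; rewrite leNgt; apply/negP => out.
have [p1 [b [q1 [p2 [d [q2 [sE nz b_c d_c]]]]]]] := in_box_detour mv_ok s_ok c_in box out.
case: (shift_alternating nz b_c d_c) => [E | E | E].
- by apply: no_l; exists [::], mv, p1, (q1 ++ p2 ++ d :: q2); rewrite sE -E.
- by apply: no_l; exists (mv :: p1), b, (q1 ++ p2), q2; rewrite sE -E /= -catA.
- apply: no_r; exists (p1 ++ b :: q1 ++ p2), d, q2, [::].
  by rewrite sE E -!catA /= -!catA.
Qed.

Lemma geodesic_no_cancel z s : (0 < n)%N -> dyoke_vertex n m z ->
    all (move_ok m) s -> in_box z s ->
    (forall x d, dyoke_path n m x d z (walk z s (size s)) -> (size s <= d)%N) ->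
  ~ has_cancel s.
Proof.
move=> n_gt0 zV s_ok s_box s_min /has_cancel_minimal[s1 [mv [s2 [s3 [sE no_l no_r]]]]].
have sub_ok u : {subset u <= s} -> all (move_ok m) u.
  by move=> sub; apply/allP => x /sub; apply/allP.
have ok' : all (move_ok m) (s1 ++ s2 ++ s3).
  by apply: sub_ok => x; rewrite sE !(mem_cat, inE) => /or3P[] ->; rewrite ?orbT.
have box' : in_box z (s1 ++ s2 ++ s3).
  move: s_box; rewrite sE -[inverse_move mv :: s3]cat1s catA -cat_cons !in_box_cat.
  case=> box1 [/in_box_cancel box2 box3]; split=> //; split.
    apply: box2 => //; apply: sub_ok => x.
    by rewrite sE !(mem_cat, inE) => /orP[] ->; rewrite ?orbT.
  by apply: eq_in_box box3; apply: lift_cancel.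
have end' : walk z (s1 ++ s2 ++ s3) (size (s1 ++ s2 ++ s3)) = walk z s (size s).
  by apply: functional_extensionality => j; rewrite /walk !take_size sE lift_cancel_mid.
have := walk_path n_gt0 zV ok' box'; rewrite end' => /s_min.
by rewrite sE !size_cat /= !size_cat /=; lia.
Qed.

End Dyoke.

(** * Interleaving around coordinate [i] *)

Definition edge_lt (i : nat) (mv : move) : bool := (mv.1 < i)%N.

Lemma bounded_interleaving z s i (q : pred move) sg :
    {in s, forall mv, shift mv i \in (if q mv then [:: 0; sg] else [:: 0; - sg])} ->
    z i = 0 -> lift z s i = 0 ->
  exists w, [/\ filter q w = filter q s, filter (predC q) w = filter (predC q) s &
    forall t, lift z (take t w) i \in [:: 0; sg]].
Proof.
move=> signs zi si.
have [|||||w [f1 f2 pre]] := @balanced_interleaving _ q (fun mv => shift mv i) sg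
    (filter q s) (filter (predC q) s).
- exact: filter_all.
- exact: filter_all.
- by apply/allP => mv; rewrite mem_filter => /andP[qmv /signs]; rewrite qmv.
- by apply/allP => mv; rewrite mem_filter => /andP[/negbTE qmv /signs]; rewrite qmv.
- rewrite -big_cat (perm_big s); last by rewrite perm_filterC.
  by move: si; rewrite /lift zi add0r.
by exists w; split=> // t; rewrite /lift zi add0r.
Qed.

Section Interleaving.
Variables (n m i : nat) (z : nat -> int) (s : seq move).
Hypotheses (n_gt0 : (0 < n)%N) (zV : dyoke_vertex n m z).
Hypotheses (s_ok : all (move_ok m) s) (s_box : in_box m z s).
Hypothesis s_min :
  forall x d, dyoke_path n m x d z (walk n m z s (size s)) -> (size s <= d)%N.
Hypotheses (i_in : (1 <= i <= m)%N) (zi : z i = 0) (si : lift z s i = 0).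

Local Notation p := (edge_lt i).

Lemma interleaving_transfer j w w' : j != i ->
    filter p w = filter p w' -> filter (predC p) w = filter (predC p) w' ->
  forall t, exists2 t', (t' <= size w')%N & lift z (take t w) j = lift z (take t' w') j.
Proof.
move=> ne f1 f2; case: (ltngtP j i) => [lt | gt | eq]; last by rewrite eq eqxx in ne.
  by apply: lift_take_transfer f1 => mv; rewrite /edge_lt -leqNgt => le; apply: shift_out; lia.
by apply: lift_take_transfer f2 => mv /negPn; rewrite /edge_lt => lt; apply: shift_out; lia.
Qed.

Lemma interleaving_geodesic w :
    filter p w = filter p s -> filter (predC p) w = filter (predC p) s ->
    (forall t, `|lift z (take t w) i| <= 1) ->
  dyoke_geodesic n m (walk n m z w) (size s) z (walk n m z s (size s)) /\
  forall j, j != i -> forall a,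
    coord_values (walk n m z w) (size s) j a <-> coord_values (walk n m z s) (size s) j a.
Proof.
move=> f1 f2 w_i.
have perm : perm_eq w s by rewrite -(perm_filterC p w) f1 f2 perm_filterC.
have sz : size w = size s := perm_size perm.
have w_ok : all (move_ok m) w by rewrite (perm_all _ perm).
have w_box : in_box m z w.
  move=> t j j_in; case: (eqVneq j i) => [-> | ne]; first exact: w_i.
  by have [t' _ ->] := interleaving_transfer ne f1 f2 t; apply: s_box.
have w_end : walk n m z w (size w) = walk n m z s (size s).
  by apply: functional_extensionality => j; rewrite /walk !take_size /lift (perm_big _ perm).
split.
  by split=> [|x d /s_min //]; rewrite -w_end -sz; apply: walk_path.
move=> j ne a; split=> -[t le_t <-].
  by have [t' le_t' E] := interleaving_transfer ne f1 f2 t; exists t' => //; rewrite /walk E.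
have [t' le_t' E] := interleaving_transfer ne (esym f1) (esym f2) t.
by exists t'; rewrite -?sz // /walk E.
Qed.

Lemma coordinate_signs : exists2 sg : int, `|sg| = 1 &
  {in s, forall mv, shift mv i \in (if p mv then [:: 0; sg] else [:: 0; - sg])}.
Proof.
have no := geodesic_no_cancel n_gt0 zV s_ok s_box s_min.
apply: two_class_signs.
- by move=> mv mv_in; apply: shift_bound (allP s_ok _ mv_in).
- move=> a b a_in b_in eq_p nz_a nz_b; rewrite (no_cancel_same_edge no s_ok a_in b_in) //.
  move: eq_p (shift_touch nz_a) (shift_touch nz_b); rewrite /edge_lt.
  by case: a b {a_in b_in nz_a nz_b} => [ea ?] [eb ?] /=; case: ltnP; case: ltnP; lia.
- by move: si; rewrite /lift zi add0r.
Qed.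

Lemma signed_geodesic sg : `|sg| = 1 -> exists w,
  [/\ dyoke_geodesic n m (walk n m z w) (size s) z (walk n m z s (size s)),
      forall t, walk n m z w t i \in [:: 0; sg] &
      forall j, j != i -> forall a,
        coord_values (walk n m z w) (size s) j a <-> coord_values (walk n m z s) (size s) j a].
Proof.
move=> sg1; have [sg0 sg01 signs] := coordinate_signs.
have [w [f1 f2 pre]] : exists w, [/\ filter p w = filter p s,
    filter (predC p) w = filter (predC p) s & forall t, lift z (take t w) i \in [:: 0; sg]].
  have [-> | ->] : sg = sg0 \/ sg = - sg0 by lia.
    exact: bounded_interleaving signs zi si.
  have [|w [f1 f2 pre]] := @bounded_interleaving z s i (predC p) (- sg0) _ zi si.
    by move=> mv /signs; rewrite /= opprK; case: (p mv).
  by exists w; split=> //; move: f2; rewrite !(@eq_filter _ _ p) // => x; apply: negbK.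
have [|geo vals] := interleaving_geodesic f1 f2.
  by move=> t; have := pre t; rewrite !inE => /orP[] /eqP->; rewrite ?normr0 ?sg1.
by exists w; split=> // t; rewrite /walk coord_repr_id ?pre //; lia.
Qed.

End Interleaving.

Lemma eq_coord_values x y d j a : (forall t, (t <= d)%N -> x t = y t) ->
  coord_values x d j a <-> coord_values y d j a.
Proof. by move=> eq_xy; split=> -[t le_t <-]; exists t => //; rewrite eq_xy. Qed.

Theorem lemma4p3 (n m : nat) (z : nat -> int) (i : nat)
    (x : nat -> nat -> int) (d : nat) :
  (1 <= n)%N ->
  dyoke_vertex n m z ->
  (1 <= i <= m)%N -> z i = 0 ->
  dyoke_geodesic n m x d z dyoke_zero ->
  (exists y : nat -> nat -> int,
     [/\ dyoke_geodesic n m y d z dyoke_zero,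
         (forall t : nat, (t <= d)%N -> y t i <= 0) &
         (forall j : nat, (j <= m.+1)%N -> j != i ->
            forall a : int, coord_values y d j a <-> coord_values x d j a)]) /\
  (exists y : nat -> nat -> int,
     [/\ dyoke_geodesic n m y d z dyoke_zero,
         (forall t : nat, (t <= d)%N -> 0 <= y t i) &
         (forall j : nat, (j <= m.+1)%N -> j != i ->
            forall a : int, coord_values y d j a <-> coord_values x d j a)]).
Proof.
move=> n_gt0 zV i_in zi [xP x_min]; case: (xP) => _ xd xV _.
have [s [sz s_ok xs]] := path_walk xP.
have s_box : in_box m z s.
  by apply: (walk_in_box (n := n)) => t; rewrite sz => le_t; rewrite -xs //; apply: xV.
have s_end : walk n m z s (size s) = dyoke_zero by rewrite sz -xs.
have s_min x' d' : dyoke_path n m x' d' z (walk n m z s (size s)) -> (size s <= d')%N.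
  by rewrite s_end sz; apply: x_min.
have si : lift z s i = 0.
  by have := congr1 (fun v => v i) s_end; rewrite /walk take_size coord_repr_id //; lia.
have signed sg : `|sg| = 1 -> exists2 y, dyoke_geodesic n m y d z dyoke_zero &
    (forall t, y t i \in [:: 0; sg]) /\ (forall j, (j <= m.+1)%N -> j != i ->
      forall a, coord_values y d j a <-> coord_values x d j a).
  move=> sg1; have [w [geo sgn vals]] := signed_geodesic n_gt0 zV s_ok s_box s_min i_in zi si sg1.
  exists (walk n m z w); first by rewrite -s_end -sz.
  split=> // j _ ne a; rewrite -sz; apply: iff_trans (vals j ne a) _.
  by apply: eq_coord_values => t le_t; rewrite xs // -sz.
have [y1 geo1 [sgn1 vals1]] := signed (-1) erefl.
have [y2 geo2 [sgn2 vals2]] := signed 1 erefl.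
split; [exists y1 | exists y2]; split=> // t _; [move: (sgn1 t) | move: (sgn2 t)];
  by rewrite !inE => /orP[] /eqP->.
Qed.
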